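(* For every nonempty graph $G$, \[\hat r(\nu(G)K_2,G)\le \hat r(G,G),\qquad\text{and consequently}\qquad \hat r_\infty(G)\le \frac{\hat r(G,G)}{\nu(G)\,|E(G)|}.\]
   Context: All graphs are finite and simple; a graph is nonempty if it has at least one edge. $\nu(G)$ is the maximum size of a matching in $G$; $tK_2$ is a matching with $t$ edges. For graphs $F,G,H$, $F\to(G,H)$ means every red--blue coloring of $E(F)$ contains a red copy of $G$ or a blue copy of $H$, and $\hat r(G,H)=\min\{|E(F)|:F\to(G,H)\}$. For a nonempty graph $G$, $\hat r_\infty(G)=\lim_{t\to\infty}\frac{\hat r(tK_2,G)}{t\,|E(G)|}$ (this limit exists). *)

From Stdlib Require Import Reals.
From mathcomp Require Import all_boot.
From mathcomp Require Import boolp.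

Set Implicit Arguments.
Unset Strict Implicit.
Unset Printing Implicit Defensive.

Record graph := Graph {
  vert : finType;
  adj : rel vert;
  adj_sym : symmetric adj;
  adj_irr : irreflexive adj }.

Definition edges (G : graph) : {set {set vert G}} :=
  [set A : {set vert G} | [exists x, exists y, adj x y && (A == [set x; y])]].

Definition nedges (G : graph) : nat := #|edges G|.

Definition is_matching (G : graph) (M : {set {set vert G}}) : bool :=
  (M \subset edges G) &&
  [forall e1 in M, forall e2 in M, (e1 != e2) ==> [disjoint e1 & e2]].

Definition nu (G : graph) : nat :=
  \max_(M : {set {set vert G}} | is_matching M) #|M|.

Definition tK2_adj (t : nat) : rel ('I_t * bool) :=
  fun u v => (u.1 == v.1) && (u.2 != v.2).

Lemma tK2_adj_sym t : symmetric (@tK2_adj t).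
Proof.
move=> [i b] [j c]; rewrite /tK2_adj /=.
by rewrite (eq_sym i j) (eq_sym b c).
Qed.

Lemma tK2_adj_irr t : irreflexive (@tK2_adj t).
Proof. by move=> [i b]; rewrite /tK2_adj /= !eqxx. Qed.

Definition tK2 (t : nat) : graph := Graph (@tK2_adj_sym t) (@tK2_adj_irr t).

Definition has_copy (F H : graph) (col : {set vert F} -> bool) : Prop :=
  exists f : vert H -> vert F, injective f /\
    forall x y, adj x y -> adj (f x) (f y) /\ col [set f x; f y].

(* F -> (G, H): every red/blue colouring of E(F) (red = true) has a red G or a blue H. *)
Definition arrows (F G H : graph) : Prop :=
  forall c : {set vert F} -> bool,
    has_copy G (fun e => c e) \/ has_copy H (fun e => ~~ c e).

(* Size Ramsey number  r^(G,H) = min { |E(F)| : F -> (G,H) }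
   (the set is always nonempty; the default 0 is never used). *)
Definition srn_pred (G H : graph) : pred nat :=
  fun m => `[< exists F : graph, arrows F G H /\ nedges F = m >].

Definition srn (G H : graph) : nat :=
  match pselect (exists m, srn_pred G H m) with
  | left h => ex_minn h
  | right _ => 0
  end.

(* The sequence  t |-> r^(tK_2, G) / (t |E(G)|)  whose limit is r^_oo(G). *)
Definition rinf_seq (G : graph) (t : nat) : R :=
  Rdiv (INR (srn (tK2 t) G)) (Rmult (INR t) (INR (nedges G))).

(** Colour the edges of the disjoint union [k F] of [k] copies of an optimal
    Ramsey graph [F -> (G, G)] (one exists by Ramsey's theorem).  Either some
    copy carries a blue [G], or every copy carries a red [G], hence a red
    [nu(G) K_2]; together these give a red [k nu(G) K_2].  So
    [r^(k nu(G) K_2, G) <= k r^(G, G)] for every [k], and the limit defining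
    [r^_oo(G)] is bounded along the subsequence [t = k nu(G)]. *)

From Stdlib Require Import Reals Lra.
From mathcomp Require Import all_boot boolp zify.

Set Implicit Arguments.
Unset Strict Implicit.
Unset Printing Implicit Defensive.

Section Ramsey.
Variables (V : finType) (col : V -> V -> bool).
Hypothesis col_sym : symmetric col.

Definition monochromatic (b : bool) (S : {set V}) :=
  {in S &, forall x y, x != y -> col x y = b}.

Definition has_monochromatic_set s t (W : {set V}) :=
  exists2 S : {set V}, S \subset W &
    (s <= #|S| /\ monochromatic true S) \/ (t <= #|S| /\ monochromatic false S).

Lemma monochromatic_extend (W S : {set V}) v b :
  v \in W -> S \subset [set w in W :\ v | col v w == b] -> monochromatic b S ->
  [/\ v |: S \subset W, #|v |: S| = #|S|.+1 & monochromatic b (v |: S)].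
Proof.
move=> vW /subsetP SN monoS.
have colv y : y \in S -> col v y = b by move/SN; rewrite !inE => /andP[_ /eqP].
split.
- rewrite subUset sub1set vW; apply/subsetP => y /SN.
  by rewrite !inE => /andP[/andP[]].
- by rewrite cardsU1; case: (boolP (v \in S)) => // /SN; rewrite !inE eqxx.
- move=> x y; rewrite !in_setU1 => /predU1P[-> | xS] /predU1P[-> | yS];
    rewrite ?eqxx //.
  + by move=> _; exact: colv.
  + by move=> _; rewrite col_sym; exact: colv.
  + exact: monoS.
Qed.

Lemma ramsey s t (W : {set V}) :
  'C(s + t, s) <= #|W| -> has_monochromatic_set s t W.
Proof.
elim: s t W => [|s IHs] t W hW.
  by exists set0; [exact: sub0set | left; split => // x y; rewrite inE].
elim: t W hW => [|t IHt] W hW.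
  by exists set0; [exact: sub0set | right; split => // x y; rewrite inE].
have [v vW] : exists v, v \in W.
  by apply/card_gt0P; apply: leq_trans hW; rewrite bin_gt0 leq_addr.
pose N b := [set w in W :\ v | col v w == b].
have NW b : N b \subset W by apply/subsetP => w; rewrite !inE => /andP[/andP[]].
have cardW : #|W| = (#|N true| + #|N false|).+1.
  rewrite (cardsD1 v W) vW add1n; congr _.+1.
  rewrite -(cardsID [set w | col v w] (W :\ v)); congr (_ + _).
    by apply: eq_card => w; rewrite !inE eqb_id andbC.
  by apply: eq_card => w; rewrite !inE eqbF_neg andbC.
have [hR | hB] : 'C(s + t.+1, s) <= #|N true| \/ 'C(s.+1 + t, s.+1) <= #|N false|.
  by rewrite [s.+1 + t]addSn -addnS; move: hW; rewrite cardW addSn binS; lia.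
- have [S SN [[hs monoS] | ht]] := IHs _ _ hR; last first.
    by exists S => //; [exact: subset_trans SN (NW _) | right].
  have [sub card mono] := monochromatic_extend vW SN monoS.
  by exists (v |: S) => //; left; rewrite card.
- have [S SN [hs | [ht monoS]]] := IHt _ hB.
    by exists S => //; [exact: subset_trans SN (NW _) | left].
  have [sub card mono] := monochromatic_extend vW SN monoS.
  by exists (v |: S) => //; right; rewrite card.
Qed.

End Ramsey.

Lemma adj_neq (G : graph) (x y : vert G) : adj x y -> x != y.
Proof. by apply: contraTneq => ->; rewrite adj_irr. Qed.

Lemma has_copy_trans (H G F : graph) (col : {set vert F} -> bool) :
  has_copy H (fun _ : {set vert G} => true) -> has_copy G col -> has_copy H col.
Proof.
move=> [g [g_inj gadj]] [f [f_inj fadj]].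
exists (f \o g); split; first exact: inj_comp.
by move=> x y /gadj[/fadj].
Qed.

Lemma clique_copy (H F : graph) (col : {set vert F} -> bool) (S : {set vert F}) :
  #|vert H| <= #|S| ->
  {in S &, forall x y, x != y -> adj x y && col [set x; y]} ->
  has_copy H col.
Proof.
move=> HS cliqueS.
pose f x := enum_val (A := mem S) (widen_ord HS (enum_rank x)).
have f_inj : injective f.
  by move=> x y /enum_val_inj /(congr1 val) /= /val_inj; exact: enum_rank_inj.
exists f; split => // x y /adj_neq xy.
have fxy : f x != f y by apply: contra xy => /eqP /f_inj ->.
by have /andP[] := cliqueS _ _ (enum_valP _) (enum_valP _) fxy.
Qed.

Definition complete_adj (N : nat) : rel 'I_N := fun x y => x != y.

Lemma complete_adj_sym N : symmetric (@complete_adj N).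
Proof. by move=> x y; rewrite /complete_adj eq_sym. Qed.

Lemma complete_adj_irr N : irreflexive (@complete_adj N).
Proof. by move=> x; rewrite /complete_adj eqxx. Qed.

Definition complete (N : nat) : graph :=
  Graph (@complete_adj_sym N) (@complete_adj_irr N).

Lemma complete_arrows (G : graph) :
  let n := #|vert G| in arrows (complete 'C(n + n, n)) G G.
Proof.
move=> n c; pose col x y := c [set x; y].
have col_sym : symmetric col by move=> x y; rewrite /col setUC.
have [|S _ [[nS monoS] | [nS monoS]]] := @ramsey _ col col_sym n n [set: _].
- by rewrite cardsT card_ord.
- left; apply: (clique_copy nS) => x y xS yS xy.
  by rewrite [adj _ _]xy; exact: monoS.
- right; apply: (clique_copy nS) => x y xS yS xy.
  by rewrite [adj _ _]xy; apply/negbT; exact: monoS.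
Qed.

Lemma exists_arrows (G : graph) : exists F, arrows F G G.
Proof. by eexists; exact: complete_arrows. Qed.

Lemma srn_attained (G H : graph) :
  (exists F, arrows F G H) -> exists F, arrows F G H /\ nedges F = srn G H.
Proof.
move=> [F0 F0GH]; rewrite /srn; case: pselect => [ex | nex].
  by case: ex_minnP => m /asboolP [F [FGH <-]] _; exists F.
by case: nex; exists (nedges F0); apply/asboolP; exists F0.
Qed.

Lemma srn_le (G H F : graph) : arrows F G H -> srn G H <= nedges F.
Proof.
move=> FGH; rewrite /srn; case: pselect => // ex.
by case: ex_minnP => m _; apply; apply/asboolP; exists F.
Qed.

Lemma max_matching_exists (G : graph) :
  exists2 M : {set {set vert G}}, is_matching M & #|M| = nu G.
Proof.
have [|M Mm maxM] := @eq_bigmax_cond _ (@is_matching G) (fun M => #|M|).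
  apply/card_gt0P; exists set0.
  by rewrite unfold_in /is_matching sub0set; apply/forall_inP => e; rewrite inE.
by exists M; rewrite // -maxM.
Qed.

Lemma nu_gt0 (G : graph) : 0 < nedges G -> 0 < nu G.
Proof.
case/card_gt0P => e eG; rewrite -(cards1 e).
apply: (@leq_bigmax_cond _ (@is_matching G) (fun M => #|M|)).
rewrite /is_matching sub1set eG.
by apply/forall_inP => e1 /set1P -> ; apply/forall_inP => e2 /set1P ->; rewrite eqxx.
Qed.

Lemma matching_copy (G : graph) (M : {set {set vert G}}) :
  is_matching M -> has_copy (tK2 #|M|) (fun _ : {set vert G} => true).
Proof.
case/andP => /subsetP ME /forall_inP Mdisj.
pose e r := enum_val (A := mem M) r.
have eM r : e r \in M by exact: enum_valP.
have [p hp] : {p : 'I_#|M| -> vert G * vert G &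
    forall r, adj (p r).1 (p r).2 && (e r == [set (p r).1; (p r).2])}.
  apply: (choice (P := fun r q => adj q.1 q.2 && (e r == [set q.1; q.2]))) => r.
  have := ME _ (eM r); rewrite inE.
  by case/existsP => x /existsP[y xy]; exists (x, y).
pose g (rb : 'I_#|M| * bool) := if rb.2 then (p rb.1).1 else (p rb.1).2.
have g_mem r b : g (r, b) \in e r.
  by have /andP[_ /eqP ->] := hp r; rewrite /g; case: b; rewrite !inE eqxx ?orbT.
have g_adj r b : adj (g (r, b)) (g (r, ~~ b)).
  by have /andP[pr _] := hp r; rewrite /g; case: b => //=; rewrite adj_sym.
exists g; split => [[r b] [r' b'] gE | [r b] [r' b'] /andP[/= /eqP <- bb']].
  have rr' : r = r'.
    apply/eqP; apply: contraT => rr'.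
    have err' : e r != e r' by apply: contra rr' => /eqP /enum_val_inj ->.
    have := implyP (forall_inP (Mdisj _ (eM r)) _ (eM r')) err'.
    by move/disjointFr/(_ (g_mem r b)); rewrite gE g_mem.
  subst r'; case: (eqVneq b b') => [-> // | bb'].
  have b'E : b' = ~~ b by case: b b' bb' gE => [] [].
  by have := g_adj r b; rewrite -b'E -gE adj_irr.
have -> : b' = ~~ b by case: b b' bb' => [] [].
by split; first exact: g_adj.
Qed.

Section DisjointCopies.
Variables (k : nat) (F : graph).

Definition copies_adj : rel ('I_k * vert F) :=
  fun p q => (p.1 == q.1) && adj p.2 q.2.

Lemma copies_adj_sym : symmetric copies_adj.
Proof. by move=> [i u] [j v]; rewrite /copies_adj /= eq_sym adj_sym. Qed.

Lemma copies_adj_irr : irreflexive copies_adj.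
Proof. by move=> [i u]; rewrite /copies_adj /= adj_irr andbF. Qed.

Definition copies : graph := Graph copies_adj_sym copies_adj_irr.

Definition layer (q : 'I_k) (e : {set vert F}) : {set vert copies} :=
  [set (q, x) | x in e].

Lemma layer_pair q x y : layer q [set x; y] = [set (q, x); (q, y)].
Proof. by rewrite /layer imsetU1 imset_set1. Qed.

Lemma nedges_copies : nedges copies <= k * nedges F.
Proof.
pose layer_edge (p : 'I_k * {set vert F}) := layer p.1 p.2.
have sub : edges copies \subset layer_edge @: setX [set: 'I_k] (edges F).
  apply/subsetP => A; rewrite inE => /existsP[[i x] /existsP[[j y]]].
  case/andP => /andP[/= /eqP <- xy] /eqP ->.
  apply/imsetP; exists (i, [set x; y]); last by rewrite /layer_edge layer_pair.
  by rewrite !inE /=; apply/existsP; exists x; apply/existsP; exists y; rewrite xy eqxx.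
apply: leq_trans (subset_leq_card sub) _.
by apply: leq_trans (leq_imset_card _ _) _; rewrite cardsX cardsT card_ord.
Qed.

Lemma layer_copy (H : graph) (col : {set vert copies} -> bool) q :
  has_copy H (fun e => col (layer q e)) -> has_copy H col.
Proof.
move=> [f [f_inj fadj]]; exists (fun x => (q, f x)); split.
  by move=> x y [] /f_inj.
by move=> x y /fadj[xy cxy]; rewrite /= /copies_adj /= eqxx xy -layer_pair.
Qed.

Lemma matching_copies m (col : {set vert copies} -> bool) :
  (forall q, has_copy (tK2 m) (fun e => col (layer q e))) ->
  has_copy (tK2 (k * m)) col.
Proof.
move=> /choice[f fP].
have card_pairs : #|{: 'I_k * 'I_m}| = k * m by rewrite card_prod !card_ord.
pose h i : 'I_k * 'I_m := enum_val (cast_ord (esym card_pairs) i).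
have h_inj : injective h by move=> i j /enum_val_inj /cast_ord_inj.
exists (fun ib : 'I_(k * m) * bool => ((h ib.1).1, f (h ib.1).1 ((h ib.1).2, ib.2))).
split => [[i b] [j b'] /= [eq1] | [i b] [j b'] /andP[/= /eqP <- bb']].
  rewrite -eq1 => /(proj1 (fP _)) [eq2 ->]; congr (_, _); apply: h_inj.
  by rewrite [h i]surjective_pairing [h j]surjective_pairing eq1 eq2.
have /(proj2 (fP (h i).1)) [adj_f col_f] : @adj (tK2 m) ((h i).2, b) ((h i).2, b').
  by rewrite /= /tK2_adj /= eqxx.
by rewrite /= /copies_adj /= eqxx adj_f -layer_pair.
Qed.

End DisjointCopies.

Lemma copies_arrows (k : nat) (F G : graph) :
  arrows F G G -> arrows (copies k F) (tK2 (k * nu G)) G.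
Proof.
move=> FGG c.
have [[q blue] | no_blue] := pselect (exists q, has_copy G (fun e => ~~ c (layer q e))).
  by right; exact: layer_copy blue.
left; apply: matching_copies => q.
have [M Mm <-] := max_matching_exists G.
apply: has_copy_trans (matching_copy Mm) _.
by case: (FGG (fun e => c (layer q e))) => // blue; case: no_blue; exists q.
Qed.

Lemma srn_matching_mul (G : graph) k : srn (tK2 (k * nu G)) G <= k * srn G G.
Proof.
have [F [FGG <-]] := srn_attained (exists_arrows G).
exact: leq_trans (srn_le (copies_arrows FGG)) (nedges_copies k F).
Qed.

Section RealBounds.
Local Open Scope R_scope.

Lemma Un_cv_le_along_multiples (u : nat -> R) (L c : R) m :
  (0 < m)%N -> Un_cv u L -> (forall k, (0 < k)%N -> u (k * m)%N <= c) -> L <= c.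
Proof.
move=> m_gt0 uL u_le; apply: Rnot_lt_le => cL.
have [N hN] := uL (L - c) ltac:(lra).
have N_le : (N <= N.+1 * m)%N by nia.
have /Rabs_def2[_] := hN _ (leP N_le).
by have := u_le N.+1 isT; lra.
Qed.

Lemma rinf_seq_matching_le (G : graph) k : (0 < k)%N -> (0 < nedges G)%N ->
  rinf_seq G (k * nu G)%N <= INR (srn G G) / (INR (nu G) * INR (nedges G)).
Proof.
move=> k_gt0 /[dup] /nu_gt0 nu_gt0 e_gt0.
have pos n : (0 < n)%N -> 0 < INR n by move=> ?; apply/lt_0_INR/ltP.
rewrite /rinf_seq mult_INR.
apply: Rle_trans (_ : _ <= INR (k * srn G G) / (INR k * INR (nu G) * INR (nedges G))) _.
  apply: Rmult_le_compat_r; last exact/le_INR/leP/srn_matching_mul.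
  apply/Rlt_le/Rinv_0_lt_compat/Rmult_lt_0_compat; last exact: pos.
  by apply: Rmult_lt_0_compat; exact: pos.
rewrite mult_INR; apply: Req_le; field.
by split; [|split]; apply: Rgt_not_eq; exact: pos.
Qed.

End RealBounds.

Theorem proposition4p1 (G : graph) :
  0 < nedges G ->
  srn (tK2 (nu G)) G <= srn G G /\
  (forall L : R, Un_cv (rinf_seq G) L ->
     Rle L (Rdiv (INR (srn G G)) (Rmult (INR (nu G)) (INR (nedges G))))).
Proof.
move=> e_gt0; split.
  by have := srn_matching_mul G 1; rewrite !mul1n.
move=> L uL; apply: (Un_cv_le_along_multiples (nu_gt0 e_gt0) uL) => k k_gt0.
exact: rinf_seq_matching_le.
Qed.
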